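(* For positive integers $r,m$ let \[J_{r,m}=\{(j_1,\dots,j_r)\in\mathbb{Z}^r:\ 1\le j_1<\dots<j_r\le m,\ j_k\le j_{k+1}-2\ \text{for all } k=1,\dots,r-1\}.\] Then \[\sum_{(j_1,\dots,j_r)\in J_{r,m}}\ \prod_{k=1}^{r}j_{r-k+1}=\frac{(m+1)_{2r}}{2^r\,r!},\] where $(x)_t=x(x-1)\cdots(x-t+1)$ is the falling factorial. *)

From mathcomp Require Import all_boot all_order all_algebra.
Set Implicit Arguments. Unset Strict Implicit. Unset Printing Implicit Defensive.

(* J_{r,m}: tuples (j_1,...,j_r) (0-indexed as j : 'I_r -> 'I_m.+1, with
   value j k standing for j_{k+1}) with 1 <= j_1, j_r <= m, and
   j_k <= j_{k+1} - 2 (i.e. j_k + 2 <= j_{k+1}); strict increase follows. *)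
Definition inJ (r m : nat) (j : {ffun 'I_r -> 'I_m.+1}) : bool :=
  [forall k : 'I_r, 1 <= j k] &&
  [forall k : 'I_r, forall l : 'I_r,
     (val l == (val k).+1) ==> (j k + 2 <= j l)].

(* Let [sumJ r b] be the sum restricted to tuples whose last entry is at most b.
   Splitting off the last entry v gives
     sumJ (r+1) b = sum_(0 < v <= b) v * sumJ r (v - 2),
   and by induction sumJ r b * 2^r r! = (b+1)_(2r): since v (v-1)_(2r) = (v)_(2r+1),
   the summands become (2r+2) (v)_(2r+1), which the hockey-stick identity
   (k+1) sum_(v <= b) (v)_k = (b+1)_(k+1) adds up.  For b = m the cap is vacuous. *)

From mathcomp Require Import all_boot all_order all_algebra.
From mathcomp Require Import zify ring.
Import GRing.Theory Num.Theory.

Set Implicit Arguments.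
Unset Strict Implicit.
Unset Printing Implicit Defensive.

Lemma sum_ffact k n : k.+1 * \sum_(v < n) v ^_ k = n ^_ k.+1.
Proof.
elim: n => [|n IHn]; first by rewrite big_ord0 muln0 ffact0n.
rewrite big_ord_recr /= mulnDr IHn ffactSS ffactnSr.
have [le_kn | lt_nk] := leqP k n; last by rewrite ffact_small //; lia.
by rewrite mulnC -mulnDl; congr (_ * _); lia.
Qed.

Lemma mul_ffact_subn2 v k : v * (v - 2).+1 ^_ (2 * k) = v ^_ (2 * k).+1.
Proof.
case: v => [|[|v]]; first by rewrite mul0n ffact0n.
  by rewrite mul1n ffactSS mul1n; case: k => [|k] //; rewrite mulnS !ffactSS.
by rewrite ffactSS subn2.
Qed.

Lemma val_lift_max n (i : 'I_n) : val (lift ord_max i) = val i.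
Proof. exact: lift_max. Qed.

Section Snoc.

Variables (T : Type) (r : nat).

Definition ffun_snoc (v : T) (g : {ffun 'I_r -> T}) : {ffun 'I_r.+1 -> T} :=
  [ffun i => if unlift ord_max i is Some i' then g i' else v].

Lemma ffun_snoc_max v g : ffun_snoc v g ord_max = v.
Proof. by rewrite ffunE unlift_none. Qed.

Lemma ffun_snoc_lift v g i : ffun_snoc v g (lift ord_max i) = g i.
Proof. by rewrite ffunE liftK. Qed.

Lemma ffun_snoc_widen v g i : ffun_snoc v g (widen_ord (leqnSn r) i) = g i.
Proof.
by rewrite -(ffun_snoc_lift v); congr (ffun_snoc v g _); apply: val_inj; rewrite val_lift_max.
Qed.

Lemma ffun_snoc_bij : bijective (fun p : T * {ffun 'I_r -> T} => ffun_snoc p.1 p.2).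
Proof.
exists (fun j : {ffun 'I_r.+1 -> T} => (j ord_max, [ffun i : 'I_r => j (lift ord_max i)])).
  move=> [v g] /=; rewrite ffun_snoc_max; congr (_, _).
  by apply/ffunP => i; rewrite ffunE ffun_snoc_lift.
move=> j; apply/ffunP => i; rewrite ffunE.
by case: unliftP => [i' ->|->]; rewrite ?ffunE.
Qed.

End Snoc.

Lemma forall_ord_snoc r (P : pred 'I_r.+1) :
  [forall i, P i] = P ord_max && [forall i : 'I_r, P (lift ord_max i)].
Proof.
apply/forallP/andP => [allP | [Pmax /forallP Plift] i].
  by split; last apply/forallP.
by case: (unliftP ord_max i) => [i' ->|->].
Qed.

Lemma forallb_and (T : finType) (P Q : pred T) :
  [forall x, P x && Q x] = [forall x, P x] && [forall x, Q x].
Proof.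
apply/forallP/andP => [PQ | [/forallP P_ /forallP Q_] x]; last by rewrite P_ Q_.
by split; apply/forallP => x; have /andP[] := PQ x.
Qed.

Section Capped.

Variable m : nat.

Definition ends_le r b (j : {ffun 'I_r -> 'I_m.+1}) : bool :=
  [forall k : 'I_r, (val k == r.-1) ==> (j k <= b)].

Lemma ends_le_snoc r b v (g : {ffun 'I_r -> 'I_m.+1}) :
  ends_le b (ffun_snoc v g) = (v <= b).
Proof.
rewrite /ends_le forall_ord_snoc ffun_snoc_max eqxx andb_idr // => _.
by apply/forallP => k; rewrite /= /bump leqNgt ltn_ord add0n (ltn_eqF (ltn_ord k)).
Qed.

Lemma inJ_snoc r v (g : {ffun 'I_r -> 'I_m.+1}) :
  inJ (ffun_snoc v g) = [&& 0 < v, inJ g & ends_le (v - 2) g].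
Proof.
rewrite /inJ /ends_le forall_ord_snoc ffun_snoc_max.
under eq_forallb => k do rewrite ffun_snoc_lift.
rewrite [X in _ && X = _]forall_ord_snoc.
rewrite [X in [&& _, X & _]](_ : _ = true); last first.
  by apply/forallP => l; rewrite (ltn_eqF (ltn_ord l)).
under [X in [&& _, _ & X] = _]eq_forallb => k.
  rewrite forall_ord_snoc ffun_snoc_max ffun_snoc_lift !val_lift_max.
  under eq_forallb => i do rewrite !ffun_snoc_lift !val_lift_max.
  over.
rewrite /= forallb_and.
case: (boolP [forall k, 0 < g k]) => [/forallP g_pos | _]; last by rewrite !andbF.
congr (_ && _); first exact: andbT.
rewrite /= andbC; congr (_ && _).
(* positivity of the entries makes the truncated subtraction [v - 2] harmless *)
apply: eq_forallb => k; rewrite /= (leq_psubRL _ _ (g_pos k)) addnC.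
by congr (_ ==> _); have := ltn_ord k; lia.
Qed.

Definition sumJ r b : nat :=
  \sum_(j : {ffun 'I_r -> 'I_m.+1} | inJ j && ends_le b j) \prod_(k < r) j k.

Lemma sumJ0 b : sumJ 0 b = 1.
Proof.
rewrite /sumJ (eq_bigl predT) => [|j]; last first.
  by rewrite /inJ /ends_le; do !(apply/andP; split); apply/forallP => -[].
rewrite (eq_bigr (fun=> 1)) => [|j _]; last by rewrite big_ord0.
by rewrite sum1_card card_ffun !card_ord.
Qed.

Lemma sumJS r b :
  sumJ r.+1 b = \sum_(v < m.+1 | 0 < v <= b) v * sumJ r (v - 2).
Proof.
rewrite /sumJ (reindex _ (onW_bij _ (@ffun_snoc_bij _ r))) /=.
under eq_bigl => p do rewrite inJ_snoc ends_le_snoc andbAC.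
under eq_bigr => p _.
  rewrite big_ord_recr /= ffun_snoc_max mulnC.
  under eq_bigr => k _ do rewrite ffun_snoc_widen.
  over.
under [RHS]eq_bigr do rewrite big_distrr.
by rewrite pair_big_dep.
Qed.

Lemma sumJ_mul_fact r b :
  b <= m -> sumJ r b * (2 ^ r * r`!) = b.+1 ^_ (2 * r).
Proof.
elim: r b => [|r IHr] b le_bm; first by rewrite sumJ0 muln0 ffactn0.
rewrite sumJS big_distrl /=.
under eq_bigr => v _.
  have -> : (v * sumJ r (v - 2) * (2 ^ r.+1 * r.+1`!)
      = (2 * r).+2 * (v * (sumJ r (v - 2) * (2 ^ r * r`!)))).
    by rewrite expnS factS; ring.
  rewrite IHr; last exact: leq_trans (leq_subr 2 v) (leq_ord v).
  rewrite mul_ffact_subn2.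
  over.
rewrite -big_distrr /= mulnS -sum_ffact; congr (_ * _).
rewrite (big_ord_widen m.+1 (fun v => v ^_ (2 * r).+1)) ?ltnS //.
rewrite big_mkcond [RHS]big_mkcond /=; apply: eq_bigr => v _.
by rewrite ltnS; case: (nat_of_ord v) => [|n]; rewrite ?ffact0n ?if_same.
Qed.

Lemma ends_le_ord r (j : {ffun 'I_r -> 'I_m.+1}) : ends_le m j.
Proof. by apply/forallP => k; apply/implyP => _; apply: leq_ord. Qed.

End Capped.

Local Open Scope ring_scope.

Theorem lemma3p4 (r m : nat) (hr : (0 < r)%N) (hm : (0 < m)%N) :
  (\sum_(j : {ffun 'I_r -> 'I_m.+1} | inJ j)
      \prod_(k < r) ((j (rev_ord k) : nat)%:R : rat))
  = (((m.+1) ^_ (2 * r))%N)%:R / ((2 ^ r * r`!)%N)%:R.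
Proof.
have fact_neq0 : (2 ^ r * r`!)%:R != 0 :> rat.
  by rewrite pnatr_eq0 -lt0n muln_gt0 expn_gt0 fact_gt0.
rewrite -(@sumJ_mul_fact m r m (leqnn m)) natrM mulfK // /sumJ natr_sum.
apply: eq_big => [j | j _]; first by rewrite ends_le_ord andbT.
by rewrite natr_prod [RHS](reindex_inj rev_ord_inj).
Qed.
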